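(* Let $n\ge 1$ and $r\ge 1$ be integers, and consider a two-sided matching problem with a set $\mathcal{M}$ of $n$ men and a set $\mathcal{W}$ of $n+r$ women, in which each man's preference list is an independent uniformly random ordering of $\mathcal{W}$ and each woman's preference list is an independent uniformly random ordering of $\mathcal{M}$. For $x\in\mathcal{M}\cup\mathcal{W}$, let $N(x)$ be the number of stable partners of $x$. Then for every $x\in\mathcal{M}\cup\mathcal{W}$, $$\mathbb{P}\bigl(N(x)>1\bigr)\le\frac{1}{r+1}\quad\text{and}\quad\mathbb{E}\bigl(N(x)\bigr)\le 1+\frac{1}{r}.$$
   Context: Stable matchings are in the sense of Gale and Shapley (a matching pairs each man with at most one woman and vice versa; it is stable if no man and woman not matched together both strictly prefer each other to their assigned partners, being unmatched ranked below every partner). $y$ is a stable partner of $x$ if $x$ and $y$ are matched in some stable matching. *)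

(* Uniform random preferences = counting measure on the
   finite type of all preference profiles. *)
From mathcomp Require Import all_boot all_order all_algebra all_fingroup.
Set Implicit Arguments. Unset Strict Implicit. Unset Printing Implicit Defensive.
Import Order.TTheory GRing.Theory Num.Theory.

(* A preference profile gives, for each man,
   a permutation of the women (P.1 m w = rank of w in m's list, 0 = best), and
   for each woman a permutation of the men (P.2 w m = rank of m in w's list). *)
Definition profile (n r : nat) : finType :=
  ({ffun 'I_n -> {perm 'I_(n + r)}} * {ffun 'I_(n + r) -> {perm 'I_n}})%type.

Definition matchingT (n r : nat) : finType := {ffun 'I_n -> option 'I_(n + r)}.

Definition is_matching n r (mu : matchingT n r) : bool :=
  [forall m1, forall m2, (mu m1 != None) && (mu m1 == mu m2) ==> (m1 == m2)].

Definition blocking n r (P : profile n r) (mu : matchingT n r)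
    (m : 'I_n) (w : 'I_(n + r)) : bool :=
  [&& mu m != Some w,
      (if mu m is Some w' then (P.1 m w < P.1 m w')%N else true) &
      [forall m', (mu m' == Some w) ==> (P.2 w m < P.2 w m')%N]].

Definition stable n r (P : profile n r) (mu : matchingT n r) : bool :=
  is_matching mu && [forall m, forall w, ~~ blocking P mu m w].

Definition Nstable n r (P : profile n r) (x : 'I_n + 'I_(n + r)) : nat :=
  match x with
  | inl m => #|[set w : 'I_(n + r) | [exists mu, stable P mu && (mu m == Some w)]]|
  | inr w => #|[set m : 'I_n | [exists mu, stable P mu && (mu m == Some w)]]|
  end.

Local Open Scope ring_scope.

Definition probN n r (E : pred (profile n r)) : rat :=
  #|[set P | E P]|%:R / #|profile n r|%:R.

Definition expect n r (X : profile n r -> nat) : rat :=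
  (\sum_(P : profile n r) (X P)%:R) / #|profile n r|%:R.

(* Run men-proposing deferred acceptance and, whenever it reaches a stable
   matching, let the breaker (x, or the partner of the woman x) leave his
   partner w and propose further, as in McVitie and Wilson's enumeration of
   stable matchings.  The attempt succeeds once w is taken by a man she
   prefers, and the run halts as soon as some man proposes to a woman who was
   unmatched when the attempt began.

   Fix a stable matching nu.  Until the run shows x with his or her nu-partner,
   no man proposes beyond his nu-partner and a bounded potential increases at
   every step, so every stable partner of x is observed at some stable
   matching of the run.  The number of successes increases strictly between
   two such times, hence N(x) <= 1 + K, with K the number of successes.

   If K > j, let b be the man whose first proposal to the abandoned woman w
   completes the (j+1)-th success.  Exchanging w with any of the r women left
   unmatched at the start of that attempt in the list of b makes the run halt
   there with exactly j successes, and the resulting map is injective.  Hence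
   r #{K > j} <= #{K = j}, i.e. (r+1) P(K > j) <= P(K >= j), which gives
   P(K >= 1) <= 1/(r+1) and E(K) <= 1/r. *)

From mathcomp Require Import all_boot all_order all_algebra all_fingroup.
From mathcomp Require Import zify.
Import Order.TTheory GRing.Theory Num.Theory.

Set Implicit Arguments. Unset Strict Implicit. Unset Printing Implicit Defensive.

Lemma unit_step_cross (f : nat -> nat) a b k :
  (forall i, f i <= f i.+1 <= (f i).+1)%N -> (f a <= k < f b)%N ->
  exists i, [/\ (a <= i < b)%N, f i = k & f i.+1 = k.+1].
Proof.
move=> f_step; have f_mono : {homo f : i j / (i <= j)%N}.
  by apply: homo_leq => // [|i]; [exact: leq_trans | case/andP: (f_step i)].
elim: b => [|b IH] /andP [ak kb].
  by have := f_mono 0 a (leq0n a); lia.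
case: (ltnP k (f b)) => [lt|le].
  have [i [/andP [ai ib] fi fi1]] := IH (introT andP (conj ak lt)).
  by exists i; rewrite ai ltnS ltnW.
have ab : (a <= b)%N by rewrite leqNgt; apply/negP => /f_mono; lia.
by exists b; have := f_step b; rewrite ab; split => //; lia.
Qed.

Lemma last_true_before (f : nat -> bool) N : f 0 -> ~~ f N ->
  exists t, [/\ (t < N)%N, f t & forall i, (t < i <= N)%N -> ~~ f i].
Proof.
move=> f0; elim: N => [|N IH] fN; first by rewrite f0 in fN.
case fN': (f N).
  by exists N; split => // i /andP [lt le]; have -> : i = N.+1 by lia.
have [t [tN ft after]] := IH (negbT fN'); exists t; split => //; first by rewrite ltnS ltnW.
move=> i /andP [ti]; rewrite leq_eqVlt => /orP [/eqP -> //|]; rewrite ltnS => iN.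
by apply: after; rewrite ti.
Qed.

Lemma card_pairs (T1 T2 : finType) (D : {set T1 * T2}) :
  #|D| = (\sum_(t : T1) #|[set u | (t, u) \in D]|)%N.
Proof.
have -> : (\sum_(t : T1) #|[set u | (t, u) \in D]|
    = \sum_t \sum_u (if (t, u) \in D then 1 else 0))%N.
  apply: eq_bigr => t _; rewrite -sum1_card big_mkcond /=.
  by apply: eq_bigr => u _; rewrite inE.
by rewrite pair_big /= -sum1_card big_mkcond /=; apply: eq_bigr => -[t u].
Qed.

Lemma contraction_sum_le (C : nat -> nat) r K : (forall j, r.+1 * C j.+1 <= C j)%N ->
  (r * (\sum_(j < K) C j.+1) + C K <= C 0)%N.
Proof.
move=> contr; elim: K => [|K IH]; first by rewrite big_ord0 muln0.
rewrite big_ord_recr /= mulnDr -addnA; apply: leq_trans IH.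
by rewrite leq_add2l; have := contr K; rewrite mulSn; lia.
Qed.

Lemma sum_ord_ltn k K : (k <= K)%N -> (\sum_(j < K) (j < k : nat))%N = k.
Proof.
move=> /minn_idPl {2}<-; rewrite -(big_mkord xpredT (fun j => (j < k : nat))).
elim: K => [|K IH]; first by rewrite big_geq // minn0.
by rewrite big_nat_recr //= IH; case: (ltnP K k) => /=; lia.
Qed.

Lemma le_ratio_inv (R : numFieldType) (a b c : nat) : (0 < b)%N -> (0 < c)%N ->
  (c * a <= b)%N -> ((a%:R / b%:R : R) <= 1 / c%:R)%R.
Proof.
move=> b0 c0 le; rewrite ler_pdivrMr ?ltr0n // mulrC mul1r ler_pdivlMr ?ltr0n //.
by rewrite -natrM ler_nat mulnC.
Qed.

(** * The extended deferred-acceptance run *)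

Section Algorithm.

Variables (n r : nat) (x : 'I_n + 'I_(n + r)).
Hypothesis r_gt0 : (0 < r)%N.

Local Notation M := 'I_n.
Local Notation W := 'I_(n + r).
Local Notation prof := (profile n r).

Definition i0 : W := Ordinal (ltn_addl n r_gt0).

Definition mrank (P : prof) (a : M) (w : W) : nat := P.1 a w.
Definition wrank (P2 : {ffun W -> {perm M}}) (w : W) (a : M) : nat := P2 w a.
Definition choice (P : prof) (a : M) (i : W) : W := ((P.1 a)^-1)%g i.

(* [ptr s a] is the rank, in the list of [a], of the woman [a] currently
   proposes to.  [attempt s = Some (w, m, U)] while man [m] has left [w] and
   the women of [U] were unmatched when he did. *)
Record state := State {
  ptr : {ffun M -> W};
  attempt : option (W * M * {set W});
  successes : nat;
  halted : bool }.

Definition state0 : state := State [ffun => i0] None 0 false.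

Definition proposal (P : prof) (s : state) : {ffun M -> W} :=
  [ffun a => choice P a (ptr s a)].

Definition rejected (tg : M -> W) (P2 : {ffun W -> {perm M}})
    (att : option (W * M * {set W})) (a : M) : bool :=
  [exists c, (c != a) && (tg c == tg a) && (wrank P2 (tg a) c < wrank P2 (tg a) a)%N]
  || (if att is Some (w, m, _) then (tg a == w) && (wrank P2 w m <= wrank P2 w a)%N
      else false).

Definition reaches_free (tg : M -> W) (att : option (W * M * {set W})) : bool :=
  if att is Some (_, _, U) then [exists a, tg a \in U] else false.

Definition free_women (tg : M -> W) : {set W} := [set w | [forall a, tg a != w]].

Definition advance (p : {ffun M -> W}) (a : M) : option {ffun M -> W} :=
  if (insub (p a).+1 : option W) is Some i then
    Some [ffun c => if c == a then i else p c]
  else None.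

Definition halt (s : state) := State (ptr s) (attempt s) (successes s) true.

Definition breaker (tg : M -> W) : option M :=
  match x with inl m => Some m | inr w => [pick a | tg a == w] end.

Definition step_with (tg : M -> W) (P2 : {ffun W -> {perm M}}) (s : state) : state :=
  if halted s then s else
  if reaches_free tg (attempt s) then halt s else
  if [pick a | rejected tg P2 (attempt s) a] is Some a then
    (if advance (ptr s) a is Some p' then State p' (attempt s) (successes s) false
     else halt s)
  else match attempt s with
  | Some (w, _, _) =>
      if [exists a, tg a == w] then State (ptr s) None (successes s).+1 false
      else halt s
  | None =>
      if breaker tg is Some m then
        (if advance (ptr s) m is Some p' then
           State p' (Some (tg m, m, free_women tg)) (successes s) false
         else halt s)
      else halt s
  end.

Definition step (P : prof) (s : state) := step_with (proposal P s) P.2 s.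
Definition run (P : prof) (i : nat) := iter i (step P) state0.
Definition horizon := (2 * n * (n + r)).+1.
Definition nsucc (P : prof) := successes (run P horizon).

Variant step_spec (tg : M -> W) (P2 : {ffun W -> {perm M}}) (s : state) :
    state -> Type :=
 | StepHalted : halted s -> step_spec tg P2 s s
 | StepHalt : ~~ halted s ->
     [\/ reaches_free tg (attempt s),
        (exists2 a, rejected tg P2 (attempt s) a & advance (ptr s) a = None),
        (forall a, ~~ rejected tg P2 (attempt s) a) /\
          (exists w m U, attempt s = Some (w, m, U) /\ forall a, tg a != w) |
        [/\ (forall a, ~~ rejected tg P2 None a), attempt s = None &
          (breaker tg = None \/
           exists2 m, breaker tg = Some m & advance (ptr s) m = None)]] ->
     step_spec tg P2 s (halt s)
 | StepReject a p' : ~~ halted s -> ~~ reaches_free tg (attempt s) ->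
     rejected tg P2 (attempt s) a -> advance (ptr s) a = Some p' ->
     step_spec tg P2 s (State p' (attempt s) (successes s) false)
 | StepSuccess w m U : ~~ halted s -> ~~ reaches_free tg (attempt s) ->
     (forall a, ~~ rejected tg P2 (attempt s) a) -> attempt s = Some (w, m, U) ->
     (exists a, tg a = w) ->
     step_spec tg P2 s (State (ptr s) None (successes s).+1 false)
 | StepBreak m p' : ~~ halted s -> attempt s = None ->
     (forall a, ~~ rejected tg P2 None a) -> breaker tg = Some m ->
     advance (ptr s) m = Some p' ->
     step_spec tg P2 s (State p' (Some (tg m, m, free_women tg)) (successes s) false).

Lemma stepP tg P2 s : step_spec tg P2 s (step_with tg P2 s).
Proof.
rewrite /step_with; case: ifP => [h|hs]; first exact: StepHalted.
have hs' : ~~ halted s by rewrite hs.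
case: ifP => hf; first by apply: StepHalt => //; apply: Or41.
have hf' : ~~ reaches_free tg (attempt s) by rewrite hf.
case: pickP => [a ha|hna].
  case e: advance => [p'|]; last by apply: StepHalt => //; apply: Or42; exists a.
  exact: (StepReject hs' hf' ha e).
have hna' a : ~~ rejected tg P2 (attempt s) a by rewrite hna.
case e: (attempt s) => [[[w m] U]|].
  case: ifP => he; last first.
    apply: StepHalt => //; apply: Or43; split => //; exists w, m, U; split => //.
    by move=> a; apply: contraFN he => ha; apply/existsP; exists a.
  apply: (StepSuccess hs' hf' hna' e).
  by case/existsP: he => a /eqP <-; exists a.
have hnb a : ~~ rejected tg P2 None a by have := hna' a; rewrite e.
case ep: breaker => [m|]; last by apply: StepHalt => //; apply: Or44; split => //; left.
case ea: advance => [p'|]; last first.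
  by apply: StepHalt => //; apply: Or44; split => //; right; exists m.
exact: StepBreak.
Qed.

Lemma advanceE p a p' : advance p a = Some p' ->
  forall c, (p' c : nat) = if c == a then (p a).+1 else p c.
Proof.
rewrite /advance; case: insubP => // i _ hi [<-] c.
by rewrite ffunE; case: (c == a).
Qed.

Lemma advance_self p a p' : advance p a = Some p' -> (p' a : nat) = (p a).+1.
Proof. by move/advanceE => ->; rewrite eqxx. Qed.

Lemma advance_other p a p' c : advance p a = Some p' -> c != a -> p' c = p c.
Proof. by move=> /advanceE h ca; apply: val_inj; rewrite /= h (negbTE ca). Qed.

Lemma advance_lt (p : {ffun M -> W}) a (b : nat) :
  (p a < b)%N -> (b < n + r)%N -> exists p', advance p a = Some p'.
Proof.
move=> lt1 lt2; rewrite /advance; case: insubP => [i _ _|]; first by eexists.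
by rewrite (leq_ltn_trans lt1 lt2).
Qed.

Lemma sum_advance p a p' : advance p a = Some p' ->
  (\sum_c (p' c : nat) = (\sum_c (p c : nat)).+1)%N.
Proof.
move=> h; rewrite (bigD1 a) //= (bigD1 a (P := predT)) //= (advance_self h) addSn.
by congr (_ + _).+1; apply: eq_bigr => c hc; rewrite (advance_other h hc).
Qed.

Lemma proposal_eq P s a w : (proposal P s a == w) = (mrank P a w == ptr s a).
Proof.
rewrite ffunE /choice /mrank; apply/eqP/eqP => [<-|h]; first by rewrite permKV.
by rewrite (_ : ptr s a = P.1 a w) ?permK //; apply: val_inj.
Qed.

Lemma mrank_proposal P s a : mrank P a (proposal P s a) = ptr s a.
Proof. by apply/eqP; rewrite -proposal_eq. Qed.

Lemma proposal_advance P s a p' c {att k b} : advance (ptr s) a = Some p' -> c != a ->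
  proposal P (State p' att k b) c = proposal P s c.
Proof. by move=> h ca; rewrite !ffunE /= (advance_other h ca). Qed.

Lemma runS P i : run P i.+1 = step P (run P i).
Proof. by rewrite /run iterS. Qed.

Lemma step_halted P s : halted s -> step P s = s.
Proof. by rewrite /step /step_with => ->. Qed.

Lemma step_reaches_free P s : ~~ halted s -> reaches_free (proposal P s) (attempt s) ->
  step P s = halt s.
Proof. by move=> h1 h2; rewrite /step /step_with (negbTE h1) h2. Qed.

Lemma ptr_step P s a : (ptr s a <= ptr (step P s) a <= (ptr s a).+1)%N.
Proof.
rewrite /step; case: stepP => /= [_|_ _|b p' _ _ _|*|m p' _ _ _ _];
  rewrite ?leqnn ?leqnSn // => /advanceE ->.
all: by case: eqP => [->|_]; rewrite ?leqnn ?leqnSn.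
Qed.

Lemma successes_step P s :
  (successes s <= successes (step P s) <= (successes s).+1)%N.
Proof. by rewrite /step; case: stepP => //= *; rewrite leqnn ?leqnSn. Qed.

Lemma halted_mono P i j : (i <= j)%N -> halted (run P i) -> halted (run P j).
Proof.
move=> /subnK <-; elim: (j - i) => // d IH h.
by rewrite addSn runS step_halted // IH.
Qed.

Lemma run_halted P i j : (i <= j)%N -> halted (run P i) -> run P j = run P i.
Proof.
move=> /subnK <-; elim: (j - i) => // d IH h.
by rewrite addSn runS IH // step_halted.
Qed.

Lemma ptr_mono P i j a : (i <= j)%N -> (ptr (run P i) a <= ptr (run P j) a)%N.
Proof.
move=> /subnK <-; elim: (j - i) => // d IH.
by rewrite addSn runS (leq_trans IH) //; case/andP: (ptr_step P (run P (d + i)) a).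
Qed.

Lemma successes_mono P i j : (i <= j)%N ->
  (successes (run P i) <= successes (run P j))%N.
Proof.
move=> /subnK <-; elim: (j - i) => // d IH.
by rewrite addSn runS (leq_trans IH) //; case/andP: (successes_step P (run P (d + i))).
Qed.

Lemma nsucc_le P : (nsucc P <= horizon)%N.
Proof.
rewrite /nsucc; elim: horizon => [|i IH] //; rewrite runS.
by case/andP: (successes_step P (run P i)) => _ h; rewrite (leq_trans h).
Qed.

Definition held P s w :=
  (exists c, proposal P s c = w) \/ (exists m U, attempt s = Some (w, m, U)).

Lemma held_step P s w : held P s w -> held P (step P s) w.
Proof.
rewrite /step; case: stepP => //.
- move=> a p' _ _ rej adv [[c hc]|[m [U e]]]; last by right; exists m, U.
  have [eca|nca] := eqVneq c a; last by left; exists c; rewrite (proposal_advance P adv nca).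
  subst c; case/orP: rej => [/existsP [c /andP [/andP [nca /eqP ec] _]]|].
    by left; exists c; rewrite (proposal_advance P adv nca) ec.
  case e: (attempt s) => [[[w' m] U]|] //= /andP [/eqP ew _].
  by right; exists m, U; rewrite -hc ew.
- move=> w' m U _ _ _ e [a ha] [[c hc]|[m' [U' e']]]; first by left; exists c.
  by left; exists a; move: e'; rewrite e => -[<- _ _].
- move=> m p' _ e _ _ adv [[c hc]|[m' [U' e']]]; last by rewrite e in e'.
  have [ecm|ncm] := eqVneq c m; last by left; exists c; rewrite (proposal_advance P adv ncm).
  by right; exists m, (free_women (proposal P s)); rewrite -ecm hc.
Qed.

Definition proposed_held P s := forall w a, (mrank P a w <= ptr s a)%N -> held P s w.

Lemma proposed_held_run P i : proposed_held P (run P i).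
Proof.
elim: i => [w a|i IH w a]; rewrite ?runS => le.
  by left; exists a; apply/eqP; rewrite proposal_eq; move: le; rewrite /= ffunE leqn0.
case: (leqP (mrank P a w) (ptr (run P i) a)) => [le'|lt]; first exact: held_step (IH _ _ le').
left; exists a; apply/eqP; rewrite proposal_eq eqn_leq le.
by case/andP: (ptr_step P (run P i) a) => _ /leq_trans; apply.
Qed.

Lemma no_rejection_inj tg P2 att : (forall a, ~~ rejected tg P2 att a) -> injective tg.
Proof.
move=> h a c e; apply/eqP; apply: contraT => nac.
have /norP [/existsPn /(_ c) ha _] := h a; have /norP [/existsPn /(_ a) hc _] := h c.
rewrite eq_sym nac e eqxx -leqNgt in ha; rewrite nac e eqxx -leqNgt in hc.
have /val_inj /perm_inj eac : wrank P2 (tg c) a = wrank P2 (tg c) c.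
  by apply/eqP; rewrite eqn_leq ha hc.
by rewrite eac eqxx in nac.
Qed.

Lemma card_free_women (tg : M -> W) : injective tg -> #|free_women tg| = r.
Proof.
move=> tg_inj; have -> : free_women tg = ~: (tg @: setT).
  apply/setP => w; rewrite !inE; apply/forallP/negP => [h /imsetP [a _ ea]|h a].
    by have := h a; rewrite ea eqxx.
  by apply/eqP => ea; apply: h; apply/imsetP; exists a.
by rewrite cardsCs setCK card_imset // cardsT !card_ord addKn.
Qed.

Definition attempt_inv P s := forall w m U, attempt s = Some (w, m, U) ->
  [/\ #|U| = r, w \notin U,
      (~~ halted s -> forall a u, u \in U -> ptr s a <= mrank P a u)%N &
      (mrank P m w < ptr s m)%N].

Lemma attempt_inv_step P s :
  proposed_held P s -> attempt_inv P s -> attempt_inv P (step P s).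
Proof.
move=> hld; rewrite /step; case: stepP => //.
- by move=> hs _ inv w m U /= e; have [] := inv w m U e.
- move=> a p' hs hf _ adv inv w m U /= e; have [cU wU below mw] := inv w m U e.
  split => // [_ a' u uU|]; last first.
    have [ema|nma] := eqVneq m a; last by rewrite (advance_other adv nma).
    by subst m; rewrite (advance_self adv) ltnS ltnW.
  have /negP nfree : proposal P s a' \notin U.
    by move: hf; rewrite e => /existsPn.
  move: (below hs a' u uU); rewrite leq_eqVlt => /orP [/eqP eu|lt].
    by case: nfree; suff -> : proposal P s a' = u by []; apply/eqP; rewrite proposal_eq eu.
  have [eaa|na] := eqVneq a' a; last by rewrite (advance_other adv na) ltnW.
  by subst a'; rewrite (advance_self adv).
- move=> m p' hs e norej _ adv inv w m' U /= [<- <- <-]; split.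
  + exact/card_free_women/(no_rejection_inj norej).
  + by rewrite inE negb_forall; apply/existsP; exists m; rewrite eqxx.
  + move=> _ a u; rewrite inE => /forallP free.
    have lt : (ptr s a < mrank P a u)%N.
      rewrite ltnNge; apply/negP => /hld [[c hc]|[? [? e']]]; last by rewrite e in e'.
      by have := free c; rewrite hc eqxx.
    have [eam|na] := eqVneq a m; last by rewrite (advance_other adv na) ltnW.
    by subst a; rewrite (advance_self adv).
  + by rewrite mrank_proposal (advance_self adv).
Qed.

Lemma attempt_inv_run P i : attempt_inv P (run P i).
Proof.
elim: i => [|i IH] //; rewrite runS.
exact/attempt_inv_step/IH/proposed_held_run.
Qed.

(* [i0] is a junk value: in a stable matching every man is matched. *)
Definition partner (nu : matchingT n r) (a : M) : W := odflt i0 (nu a).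

Lemma matching_inj (nu : matchingT n r) a c w :
  is_matching nu -> nu a = Some w -> nu c = Some w -> a = c.
Proof.
by move=> /forallP /(_ a) /forallP /(_ c) + ea ec; rewrite ea ec eqxx => /eqP.
Qed.

Lemma stable_no_blocking P (nu : matchingT n r) c w : stable P nu ->
  nu c != Some w ->
  (if nu c is Some w' then (P.1 c w < P.1 c w')%N else true) ->
  (forall m, nu m = Some w -> (P.2 w c < P.2 w m)%N) -> False.
Proof.
case/andP => _ /forallP /(_ c) /forallP /(_ w) + h1 h2 h3.
rewrite /blocking h1 h2 /= => /negP; apply; apply/forallP => m.
by apply/implyP => /eqP; apply: h3.
Qed.

Lemma stable_matched P (nu : matchingT n r) a : stable P nu -> nu a = Some (partner nu a).
Proof.
move=> st; rewrite /partner; case e: (nu a) => [w|] //; exfalso.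
have lt : #|[set partner nu c | c in M]| < #|W|.
  rewrite (leq_ltn_trans (leq_imset_card _ _)) // !card_ord; lia.
have /subsetPn [u _ uN] : ~~ ([set: W] \subset [set partner nu c | c in M]).
  by apply: contraL lt => /subset_leq_card; rewrite cardsT -leqNgt.
apply: (stable_no_blocking (c := a) (w := u) st); rewrite ?e //.
by move=> m em; case/imsetP: uN; exists m; rewrite // /partner em.
Qed.

Lemma stable_no_blocking_partner P (nu : matchingT n r) c w : stable P nu ->
  partner nu c != w -> (mrank P c w < mrank P c (partner nu c))%N ->
  (forall m, partner nu m = w -> (wrank P.2 w c < wrank P.2 w m)%N) -> False.
Proof.
move=> st h1 h2 h3; apply: (stable_no_blocking (c := c) (w := w) st).
- by rewrite (stable_matched _ st); apply: contra h1 => /eqP [->].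
- by rewrite (stable_matched _ st).
- by move=> m e; apply: h3; rewrite /partner e.
Qed.

Lemma partner_inj P (nu : matchingT n r) : stable P nu -> injective (partner nu).
Proof.
move=> st a c e; apply: (matching_inj (w := partner nu c) (proj1 (andP st))).
  by rewrite -e; apply: stable_matched st.
exact: stable_matched st.
Qed.

(** * Every stable partner of x is observed *)

Definition below P (nu : matchingT n r) s :=
  (forall a, ptr s a <= mrank P a (partner nu a))%N /\
  (forall w m U, attempt s = Some (w, m, U) ->
     (mrank P m w < mrank P m (partner nu m))%N /\ forall u a, u \in U -> partner nu a != u).

Definition quiescent P s := [&& ~~ halted s, attempt s == None &
  [forall a, ~~ rejected (proposal P s) P.2 None a]].

Definition matches_x P (nu : matchingT n r) s :=
  match x with
  | inl a => proposal P s a == partner nu a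
  | inr w => [exists c, (proposal P s c == w) && (partner nu c == w)]
  end.

Definition x_matched (nu : matchingT n r) :=
  if x is inr w then exists c, partner nu c = w else True.

Definition potential s := (2 * (\sum_a (ptr s a : nat)) + (attempt s == None))%N.

Lemma potential_le s : (potential s <= horizon)%N.
Proof.
have : (\sum_a (ptr s a : nat) <= n * (n + r))%N.
  rewrite -[n in (n * _)%N]card_ord -sum_nat_const; apply: leq_sum => a _.
  exact: ltnW.
rewrite /potential /horizon; case: (attempt s == None) => /=; lia.
Qed.

Section BelowStable.

Variables (P : prof) (nu : matchingT n r).
Hypothesis nu_stable : stable P nu.

Lemma proposal_partner s a :
  ptr s a = mrank P a (partner nu a) :> nat -> proposal P s a = partner nu a.
Proof. by move=> e; apply/eqP; rewrite proposal_eq e. Qed.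

Lemma proposal_lt_partner s a : (ptr s a <= mrank P a (partner nu a))%N ->
  proposal P s a != partner nu a ->
  (mrank P a (proposal P s a) < mrank P a (partner nu a))%N.
Proof.
move=> le ne; rewrite mrank_proposal ltn_neqAle le andbT.
by apply: contra ne => /eqP /proposal_partner ->.
Qed.

Lemma proposal_matched s : (forall a, ptr s a <= mrank P a (partner nu a))%N ->
  forall a, exists c, partner nu c = proposal P s a.
Proof.
move=> le a; have [e|ne] := eqVneq (proposal P s a) (partner nu a); first by exists a.
case: (boolP [exists c, partner nu c == proposal P s a]) => [/existsP [c /eqP]|/existsPn none].
  by exists c.
exfalso; apply: (stable_no_blocking_partner nu_stable (c := a) (w := proposal P s a)).
- by rewrite eq_sym.
- exact: proposal_lt_partner.
- by move=> m em; have := none m; rewrite em eqxx.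
Qed.

Lemma partner_proposed s : (forall a, ptr s a <= mrank P a (partner nu a))%N ->
  injective (proposal P s) -> forall c, exists a, proposal P s a = partner nu c.
Proof.
move=> le inj c.
have sub : proposal P s @: setT \subset partner nu @: setT.
  apply/subsetP => w /imsetP [a _ ->]; have [c' <-] := proposal_matched le a.
  exact: imset_f.
have /eqP eq : proposal P s @: setT == partner nu @: setT.
  by rewrite eqEcard sub /= (card_imset _ inj) (card_imset _ (partner_inj nu_stable)).
have : partner nu c \in proposal P s @: setT by rewrite eq imset_f.
by case/imsetP => a _ ->; exists a.
Qed.

Lemma below_not_reaches_free s : below P nu s -> ~~ reaches_free (proposal P s) (attempt s).
Proof.
case=> le hatt; rewrite /reaches_free; case e: (attempt s) => [[[w m] U]|] //.
apply/existsP => -[a aU]; have [_ hU] := hatt _ _ _ e.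
have [ea|ne] := eqVneq (proposal P s a) (partner nu a).
  by have := hU _ a aU; rewrite -ea eqxx.
apply: (stable_no_blocking_partner nu_stable (c := a) (w := proposal P s a)).
- exact: hU.
- exact: proposal_lt_partner.
- by move=> m' em'; have := hU _ m' aU; rewrite em' eqxx.
Qed.

Lemma rejected_below s a : below P nu s ->
  rejected (proposal P s) P.2 (attempt s) a -> (ptr s a < mrank P a (partner nu a))%N.
Proof.
case=> le hatt rej; rewrite ltn_neqAle le andbT; apply/negP => /eqP /proposal_partner ea.
case/orP: rej => [/existsP [c /andP [/andP [ca /eqP ec] lt]]|].
  have nc : proposal P s c != partner nu c.
    by rewrite ec ea; apply: contra ca => /eqP /(partner_inj nu_stable) ->.
  apply: (stable_no_blocking_partner nu_stable (c := c) (w := proposal P s a)).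
  - by rewrite -ec eq_sym.
  - by rewrite -ec; apply: proposal_lt_partner.
  - by move=> m em; rewrite (partner_inj nu_stable (etrans em ea)).
case e: (attempt s) => [[[w m] U]|] //= /andP [/eqP ew wle].
have [mw _] := hatt _ _ _ e.
have nm : partner nu m != w by apply: contraTneq mw => ->; rewrite ltnn.
have nma : m != a by apply: contraNneq nm => ->; rewrite -ea ew.
apply: (stable_no_blocking_partner nu_stable (c := m) (w := w)) => // m' em'.
have -> : m' = a by apply: (partner_inj nu_stable); rewrite em' -ew ea.
rewrite ltn_neqAle wle andbT.
by apply: contra nma => /eqP /val_inj /perm_inj ->.
Qed.

Lemma breaker_below s : x_matched nu -> below P nu s ->
  (forall a, ~~ rejected (proposal P s) P.2 None a) -> ~~ matches_x P nu s ->
  exists2 m, breaker (proposal P s) = Some m & (ptr s m < mrank P m (partner nu m))%N.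
Proof.
move=> xm [le _] norej; have inj := no_rejection_inj norej.
rewrite /breaker /matches_x; move: xm; rewrite /x_matched; case: x => [a|w] xm nmx.
  exists a => //; rewrite ltn_neqAle le andbT.
  by apply: contra nmx => /eqP /proposal_partner ->.
case: xm => c pc; have [a pa] := partner_proposed le inj c.
case: pickP => [m /eqP pm|/(_ a)]; last by rewrite pa pc eqxx.
exists m => //; rewrite ltn_neqAle le andbT; apply: contra nmx => /eqP /proposal_partner e.
by apply/existsP; exists m; rewrite pm eqxx -e pm eqxx.
Qed.

Lemma below_no_halt s : x_matched nu -> below P nu s -> attempt_inv P s ->
  ~~ halted s -> ~~ (quiescent P s && matches_x P nu s) -> ~~ halted (step P s).
Proof.
move=> xm bel inv; have nfree := below_not_reaches_free bel; case: (bel) => le _.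
rewrite /step; case: stepP => //= hs [hf|[a rej adv]|[norej [w [m [U [e nw]]]]]|[norej e hbr]] _.
- by rewrite hf in nfree.
- have [p' adv'] := advance_lt (rejected_below bel rej) (ltn_ord (P.1 a _)).
  by rewrite adv' in adv.
- have [cardU wU _ _] := inv _ _ _ e.
  have /eqP im : proposal P s @: setT == ~: U.
    rewrite eqEcard (card_imset _ (no_rejection_inj norej)) cardsCs setCK cardU.
    rewrite cardsT !card_ord addnK leqnn andbT; apply/subsetP => _ /imsetP [a _ ->].
    by rewrite inE; move: nfree; rewrite e => /existsPn.
  have : w \in proposal P s @: setT by rewrite im inE.
  by case/imsetP => a _ ea; have := nw a; rewrite ea eqxx.
- have quiet : quiescent P s by rewrite /quiescent hs e eqxx; apply/forallP.
  rewrite quiet /= => nmx; have [m bm lt] := breaker_below xm bel norej nmx.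
  have [p' adv] := advance_lt lt (ltn_ord (P.1 m _)).
  case: hbr => [|[m' bm' adv']]; first by rewrite bm.
  by move: bm'; rewrite bm => -[em]; rewrite -em adv in adv'.
Qed.

Lemma below_step s : x_matched nu -> below P nu s -> attempt_inv P s ->
  ~~ halted s -> ~~ (quiescent P s && matches_x P nu s) ->
  below P nu (step P s) /\ (potential s < potential (step P s))%N.
Proof.
move=> xm bel inv hs nq; move: (below_no_halt xm bel inv hs nq); case: (bel) => le hatt.
rewrite /step; case: stepP => //=; first by move=> h; rewrite h in hs.
- move=> a p' _ _ rej adv _; split.
    split=> // a'; have [eaa|na] := eqVneq a' a; last by rewrite (advance_other adv na).
    by subst a'; rewrite (advance_self adv); apply: rejected_below bel rej.
  rewrite /potential /= (sum_advance adv); set S := (\sum_c _)%N; lia.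
- move=> w m U _ _ _ e _ _; split => //.
  by rewrite /potential /= e /= addn0 addn1.
- move=> m p' _ e norej bm adv _; move: nq.
  have quiet : quiescent P s by rewrite /quiescent hs e eqxx; apply/forallP.
  rewrite quiet /= => nmx; have [m' bm' lt] := breaker_below xm bel norej nmx.
  move: bm'; rewrite bm => -[em]; subst m'; split; last first.
    by rewrite /potential /= (sum_advance adv) e; set S := (\sum_c _)%N; lia.
  split => /= [a|w m' U [<- <- <-]].
    have [eam|na] := eqVneq a m; last by rewrite (advance_other adv na).
    by subst a; rewrite (advance_self adv).
  split; first by rewrite mrank_proposal.
  move=> u a; rewrite inE => /forallP free.
  have [c <-] := partner_proposed le (no_rejection_inj norej) a.
  by apply/eqP => ec; have := free c; rewrite ec eqxx.
Qed.

Lemma stable_reached : x_matched nu ->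
  exists i, [/\ (i <= horizon)%N, quiescent P (run P i) & matches_x P nu (run P i)].
Proof.
move=> xm.
have reach i : (exists i', [/\ (i' <= i)%N, quiescent P (run P i') & matches_x P nu (run P i')])
   \/ [/\ below P nu (run P i), ~~ halted (run P i) & (i < potential (run P i))%N].
  elim: i => [|i [[i' [le q mx]]|[bel hs lt]]].
  - by right; split => //; [split => // a; rewrite /= ffunE | rewrite /potential /= addn1].
  - by left; exists i'; split => //; rewrite (leq_trans le).
  - case qm: (quiescent P (run P i) && matches_x P nu (run P i)).
      by left; exists i; case/andP: qm.
    have inv := @attempt_inv_run P i.
    have [bel' lt'] := below_step xm bel inv hs (negbT qm).
    right; rewrite runS; split => //; first exact: below_no_halt xm bel inv hs (negbT qm).
    exact: leq_ltn_trans lt lt'.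
case: (reach horizon) => [[i [le q mx]]|[_ _ lt]]; first by exists i.
by have := potential_le (run P horizon); rewrite leqNgt lt.
Qed.

End BelowStable.

Lemma successes_after_quiescent P i d : quiescent P (run P i) ->
  [\/ halted (run P (d.+1 + i)), (successes (run P i) < successes (run P (d.+1 + i)))%N |
      attempt (run P (d.+1 + i)) != None /\ successes (run P (d.+1 + i)) = successes (run P i)].
Proof.
case/and3P => hs /eqP e /forallP norej; elim: d => [|d IH].
  rewrite add1n runS /step; case: stepP => //=.
  - by rewrite (negbTE hs).
  - by move=> _ _; apply: Or31.
  - by move=> a p' _ _; rewrite e => rej; have := norej a; rewrite rej.
  - by move=> w m U _ _ _; rewrite e.
  - by move=> *; apply: Or33.
rewrite addSn runS; case: IH => [h|lt|[ne eq]].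
- by apply: Or31; rewrite step_halted.
- apply: Or32; apply: (leq_trans lt).
  by case/andP: (successes_step P (run P (d.+1 + i))).
- rewrite /step; case: stepP => //=.
  + by move=> ->; apply: Or31.
  + by move=> _ _; apply: Or31.
  + by move=> *; apply: Or33.
  + by move=> *; apply: Or32; rewrite eq.
  + by move=> m p' _ e'; rewrite e' in ne.
Qed.

Lemma quiescent_successes_lt P i j : quiescent P (run P i) -> quiescent P (run P j) ->
  (i < j)%N -> (successes (run P i) < successes (run P j))%N.
Proof.
move=> qi qj /subnK; rewrite addnS -addSn => ej.
have := successes_after_quiescent (j - i.+1) qi; rewrite ej.
case/and3P: qj => hs /eqP e _.
by case=> [h|//|[ne _]]; [rewrite h in hs | rewrite e in ne].
Qed.

Definition quiescent_times P := [set i : 'I_horizon.+1 | quiescent P (run P i)].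

Lemma card_quiescent_times P : (#|quiescent_times P| <= (nsucc P).+1)%N.
Proof.
rewrite -[X in (_ <= X)%N]card_ord.
apply: (@leq_card_in _ _ (fun i : 'I_horizon.+1 => inord (successes (run P i)) : 'I_(nsucc P).+1)).
move=> i j; rewrite !inE => qi qj.
have lei : (successes (run P i) <= nsucc P)%N by apply: successes_mono; rewrite -ltnS.
have lej : (successes (run P j) <= nsucc P)%N by apply: successes_mono; rewrite -ltnS.
move/(congr1 val); rewrite /= !inordK ?ltnS // => e.
apply/val_inj; case: (ltngtP i j) => // lt.
  by have := quiescent_successes_lt qi qj lt; rewrite e ltnn.
by have := quiescent_successes_lt qj qi lt; rewrite e ltnn.
Qed.

Lemma stable_quiescent_time P (mu : matchingT n r) : stable P mu -> x_matched mu ->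
  exists2 i, i \in quiescent_times P & matches_x P mu (run P i).
Proof.
move=> st xm; have [i [le q mx]] := stable_reached st xm.
by exists (Ordinal (le : (i < horizon.+1)%N)); rewrite ?inE.
Qed.

Lemma Nstable_le P : (Nstable P x <= (nsucc P).+1)%N.
Proof.
apply: leq_trans (card_quiescent_times P); rewrite /Nstable.
case ex: x => [a|w].
  set f := fun i : 'I_horizon.+1 => proposal P (run P i) a.
  apply: leq_trans (leq_imset_card f _); apply/subset_leq_card/subsetP => w.
  rewrite inE => /existsP [mu /andP [st /eqP ea]].
  have [|i qi] := stable_quiescent_time st; first by rewrite /x_matched ex.
  rewrite /matches_x ex => /eqP fi; apply/imsetP; exists i => //.
  by rewrite /f fi /partner ea.
set f := fun i : 'I_horizon.+1 => breaker (proposal P (run P i)).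
rewrite -(card_imset _ (@Some_inj _)).
apply: leq_trans (leq_imset_card f _); apply/subset_leq_card/subsetP => _ /imsetP [c + ->].
rewrite inE => /existsP [mu /andP [st /eqP ec]].
have xm : x_matched mu by rewrite /x_matched ex; exists c; rewrite /partner ec.
have [i qi] := stable_quiescent_time st xm.
rewrite /matches_x ex => /existsP [c' /andP [/eqP pc' /eqP mc']].
have -> : c = c' by apply: (partner_inj st); rewrite mc' /partner ec.
apply/imsetP; exists i => //; rewrite /f /breaker ex.
case: pickP => [c'' /eqP pc''|/(_ c')]; last by rewrite pc' eqxx.
move: qi; rewrite inE => /and3P [_ _ /forallP norej].
by congr Some; apply: (no_rejection_inj norej); rewrite pc'' pc'.
Qed.

(** * Swapping at the pivotal proposal *)

Definition swap_pref (P : prof) (b : M) (w u : W) : prof :=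
  ([ffun a => if a == b then (tperm w u * P.1 a)%g else P.1 a], P.2).

Lemma swap_prefK P b w u : swap_pref (swap_pref P b w u) b w u = P.
Proof.
case: P => P1 P2; congr (_, _); apply/ffunP => a; rewrite !ffunE.
by case: eqP => // ->; rewrite mulgA tperm2 mul1g.
Qed.

Lemma proposal_swap P b w u s a : proposal (swap_pref P b w u) s a =
  if a == b then tperm w u (proposal P s a) else proposal P s a.
Proof.
by rewrite !ffunE /choice /= ffunE; case: eqP => // _; rewrite invMg permM tpermV.
Qed.

Lemma step_ext P Q s : (forall a, proposal Q s a = proposal P s a) -> Q.2 = P.2 ->
  step Q s = step P s.
Proof.
by move=> /ffunP e e2; rewrite /step e e2.
Qed.

Section Pivotal.

Variable j : nat.

Definition attempt_woman P h := if attempt (run P h) is Some (w, _, _) then w else i0.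
Definition attempt_free P h := if attempt (run P h) is Some (_, _, U) then U else set0.

(* Man [b] proposes at time [h], for the first time, to the woman [w] of the
   attempt that would give the [j.+1]-th success.  Exchanging [w] with some [u]
   of [U] in his list does not change the run before [h], since he ranks all
   his earlier proposals above [w], and makes it halt right after [h]. *)
Definition pivotal P (h : 'I_horizon) b :=
  let s := run P h in
  [&& ~~ halted s, successes s == j, ~~ reaches_free (proposal P s) (attempt s),
      (if attempt s is Some (w, _, U) then
         [&& proposal P s b == w, #|U| == r & [forall u in U, mrank P b w < mrank P b u]%N]
       else false) &
      [forall i : 'I_h, ptr (run P i) b < ptr s b]%N].

Lemma pivotal_not_halted P h b i : pivotal P h b -> (i <= h)%N -> ~~ halted (run P i).
Proof. by case/and5P => hs _ _ _ _ le; apply: contra hs; apply: halted_mono. Qed.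

Lemma pivotal_proposal P h b : pivotal P h b -> proposal P (run P h) b = attempt_woman P h.
Proof.
by case/and5P => _ _ _; rewrite /attempt_woman; case: attempt => [[[w m] U]|] // /and3P [/eqP].
Qed.

Lemma run_swap_pivotal P h b u : pivotal P h b -> u \in attempt_free P h ->
  forall i, (i <= h)%N -> run (swap_pref P b (attempt_woman P h) u) i = run P i.
Proof.
rewrite /pivotal /attempt_woman /attempt_free; set s := run P h.
case/and5P => _ _ _; case e: (attempt s) => [[[w m] U]|] //.
case/and3P => /eqP pb _ /forallP pref /forallP fresh uU.
elim=> // i IH lt; rewrite !runS IH ?(ltnW lt) //.
apply: step_ext => // a; rewrite proposal_swap; case: eqP => // ->.
have lt1 : (ptr (run P i) b < mrank P b w)%N by rewrite -pb mrank_proposal (fresh (Ordinal lt)).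
have lt2 : (mrank P b w < mrank P b u)%N by have := pref u; rewrite uU.
rewrite tpermD // eq_sym proposal_eq; apply/eqP => e'.
  by rewrite e' ltnn in lt1.
by rewrite e' in lt2; have := ltn_trans lt1 lt2; rewrite ltnn.
Qed.

Lemma proposal_swap_pivotal P h b u a : pivotal P h b -> u \in attempt_free P h ->
  (proposal (swap_pref P b (attempt_woman P h) u) (run P h) a \in attempt_free P h) = (a == b).
Proof.
move=> piv; have := pivotal_proposal piv; move: piv.
rewrite /pivotal /attempt_woman /attempt_free; set s := run P h.
case/and5P => _ _ nfree; case e: (attempt s) => [[[w m] U]|] // _ _ pb uU.
rewrite proposal_swap; case: eqP => [->|_]; first by rewrite pb tpermL uU.
by apply/negbTE; move: nfree; rewrite e => /existsPn.
Qed.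

Lemma run_swap_halts P h b u : pivotal P h b -> u \in attempt_free P h ->
  run (swap_pref P b (attempt_woman P h) u) h.+1 = halt (run P h).
Proof.
move=> piv uU; rewrite runS run_swap_pivotal //.
apply: step_reaches_free; first exact: pivotal_not_halted piv (leqnn h).
move: (proposal_swap_pivotal b piv uU); rewrite eqxx /attempt_free /reaches_free.
case: attempt => [[[w m] U]|] fb; last by rewrite inE in fb.
by apply/existsP; exists b.
Qed.

Lemma nsucc_swap P h b u : pivotal P h b -> u \in attempt_free P h ->
  nsucc (swap_pref P b (attempt_woman P h) u) = j.
Proof.
move=> piv uU; rewrite /nsucc (run_halted (i := h.+1)) //; last by rewrite run_swap_halts.
by rewrite run_swap_halts //=; case/and5P: piv => _ /eqP.
Qed.

Lemma swap_pivotal_inj P P' h h' b b' u u' : pivotal P h b -> pivotal P' h' b' ->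
  u \in attempt_free P h -> u' \in attempt_free P' h' ->
  swap_pref P b (attempt_woman P h) u = swap_pref P' b' (attempt_woman P' h') u' ->
  P = P' /\ u = u'.
Proof.
move=> piv piv' uU uU' eQ; set Q := swap_pref P b _ u in eQ.
have eh : h = h'.
  apply: val_inj; case: (ltngtP h h') => // lt.
    have := pivotal_not_halted piv' lt; rewrite -(run_swap_pivotal piv' uU') //.
    by rewrite -eQ run_swap_halts.
  have := pivotal_not_halted piv lt; rewrite -(run_swap_pivotal piv uU) // -/Q eQ.
  by rewrite run_swap_halts.
subst h'.
have es : run P h = run P' h.
  by rewrite -(run_swap_pivotal piv uU (leqnn h)) -/Q eQ run_swap_pivotal.
have ew : attempt_woman P h = attempt_woman P' h by rewrite /attempt_woman es.
have eU : attempt_free P h = attempt_free P' h by rewrite /attempt_free es.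
have eb : b = b'.
  apply/eqP; rewrite -(proposal_swap_pivotal b piv' uU') -eQ -es -eU.
  by rewrite proposal_swap_pivotal // eqxx.
subst b'.
have eu : u = u'.
  have := congr1 (fun R => proposal R (run P h) b) eQ; rewrite /= !proposal_swap eqxx.
  by rewrite (pivotal_proposal piv) es (pivotal_proposal piv') !tpermL.
subst u'; split => //.
by rewrite -(swap_prefK P b (attempt_woman P h) u) -/Q eQ -ew swap_prefK.
Qed.

Lemma attempt_step_const P s w m U w' m' U' : attempt s = Some (w, m, U) ->
  attempt (step P s) = Some (w', m', U') ->
  (w', m', U') = (w, m, U) /\ successes (step P s) = successes s.
Proof.
move=> e; rewrite /step; case: stepP => /=; rewrite ?e //.
- by move=> _ [-> -> ->].
- by move=> _ _ [-> -> ->].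
- by move=> a p' _ _ _ _ [-> -> ->].
Qed.

Lemma success_step P s : successes (step P s) = (successes s).+1 ->
  ~~ halted (step P s) /\
  exists w m U, attempt s = Some (w, m, U) /\ exists b, proposal P s b = w.
Proof.
rewrite /step; case: stepP => /=; try by move=> *; lia.
by move=> w m U _ _ _ e hb _; split => //; exists w, m, U.
Qed.

Lemma break_step P s w m U : attempt s = None -> attempt (step P s) = Some (w, m, U) ->
  [/\ (forall a, ~~ rejected (proposal P s) P.2 None a), proposal P s m = w &
      advance (ptr s) m = Some (ptr (step P s))].
Proof.
move=> e; rewrite /step; case: stepP => /=; rewrite ?e //.
by move=> m' p' _ _ norej _ adv [<- <- _].
Qed.

Lemma attempt_interval P i w m U : attempt (run P i) = Some (w, m, U) ->
  exists t, [/\ (t < i)%N, attempt (run P t) = None &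
    forall k, (t < k <= i)%N ->
      attempt (run P k) = Some (w, m, U) /\ successes (run P k) = successes (run P i)].
Proof.
move=> e; have ne : ~~ (attempt (run P i) == None) by rewrite e.
have [t [ti /eqP tnone after]] :=
  @last_true_before (fun k => attempt (run P k) == None) i erefl ne.
have back d : (t < i - d)%N ->
    attempt (run P (i - d)) = Some (w, m, U) /\ successes (run P (i - d)) = successes (run P i).
  elim: d => [|d IH] td; first by rewrite subn0 e.
  have [|e1 e2] := IH; first by apply: leq_trans td _; rewrite leq_sub2l.
  have ei : i - d = (i - d.+1).+1 by lia.
  rewrite ei runS in e1 e2.
  case ed: (attempt (run P (i - d.+1))) => [[[w1 m1] U1]|].
    by have [[-> -> ->] e3] := attempt_step_const ed e1; rewrite -e2 e3.
  by have := after (i - d.+1); rewrite ed td leq_subr => /(_ isT).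
exists t; split => // k /andP [tk ki]; rewrite -(subKn ki); by apply: back; rewrite subKn.
Qed.

Lemma run_not_reaches_free P h i : (h < i)%N -> ~~ halted (run P i) ->
  ~~ reaches_free (proposal P (run P h)) (attempt (run P h)).
Proof.
move=> hi hs; apply/negP => rf.
have hs' : ~~ halted (run P h) by apply: contra hs; apply/halted_mono/ltnW.
have := @halted_mono P _ _ hi; rewrite runS (step_reaches_free hs' rf) => /(_ isT).
by apply/negP.
Qed.

Lemma pivotal_intro P (h : 'I_horizon) b w m U :
  ~~ halted (run P h) -> successes (run P h) = j ->
  ~~ reaches_free (proposal P (run P h)) (attempt (run P h)) ->
  attempt (run P h) = Some (w, m, U) -> ptr (run P h) b = mrank P b w :> nat ->
  (forall i, (i < h)%N -> ptr (run P i) b < mrank P b w)%N -> pivotal P h b.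
Proof.
move=> hs sj nfree e pb fresh; rewrite /pivotal hs sj eqxx nfree e /=.
have [cU wU below _] := attempt_inv_run e.
apply/andP; split; last by apply/forallP => i; rewrite pb; apply: fresh.
rewrite proposal_eq pb eqxx cU eqxx; apply/forall_inP => u uU.
rewrite -pb ltn_neqAle below // andbT pb; apply: contraNneq wU => /val_inj /perm_inj ->.
by rewrite uU.
Qed.

Lemma first_reach_pivotal P t0 i1 w m U b : (i1 < horizon)%N -> ~~ halted (run P i1.+1) ->
  (forall k, (t0 < k <= i1)%N -> attempt (run P k) = Some (w, m, U) /\ successes (run P k) = j) ->
  (ptr (run P t0.+1) b < mrank P b w)%N -> ptr (run P i1) b = mrank P b w :> nat ->
  exists h, pivotal P h b.
Proof.
move=> i1h hs window lt1 pbw.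
have [i [/andP [t0i ii1] fi fi1]] :
    exists i, [/\ (t0.+1 <= i < i1)%N, ptr (run P i) b = (mrank P b w).-1 :> nat &
                  ptr (run P i.+1) b = (mrank P b w).-1.+1 :> nat].
  apply: unit_step_cross => [k|]; first by rewrite runS; apply: ptr_step.
  by rewrite pbw; lia.
have hlt : (i.+1 < horizon)%N by lia.
pose h : 'I_horizon := Ordinal hlt.
have runh : run P h = run P i.+1 by [].
have [eh sh] : attempt (run P h) = Some (w, m, U) /\ successes (run P h) = j.
  by apply: window; rewrite /=; lia.
exists h; apply: (pivotal_intro (w := w) (m := m) (U := U)) => //; rewrite ?runh.
- by apply: contra hs; apply: halted_mono; rewrite ltnW.
- exact: run_not_reaches_free (ii1 : (i.+1 < i1.+1)%N) hs.
- by rewrite fi1; lia.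
- by move=> k /ltnSE ki; have := ptr_mono P b ki; rewrite fi; lia.
Qed.

Lemma exists_pivotal P : (j < nsucc P)%N -> exists h b, pivotal P h b.
Proof.
move=> jn.
have [i1 [/andP [_ i1h] c1 c2]] :
    exists i, [/\ (0 <= i < horizon)%N, successes (run P i) = j & successes (run P i.+1) = j.+1].
  by apply: unit_step_cross => // i; rewrite runS; apply: successes_step.
have succ : successes (step P (run P i1)) = (successes (run P i1)).+1.
  by rewrite -runS c2 c1.
have [hs [w [m [U [e [b pb]]]]]] := success_step succ; rewrite -runS in hs.
have [t0 [t0i1 st0 window]] := attempt_interval e.
have [e1 _] := window t0.+1 (introT andP (conj (ltnSn t0) t0i1)).
rewrite runS in e1; have [norej pm adv] := break_step st0 e1; rewrite -runS in adv.
have pbw : ptr (run P i1) b = mrank P b w :> nat by rewrite -pb mrank_proposal.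
have nbm : b != m.
  apply/eqP => ebm; subst b; have := ptr_mono P m t0i1.
  by rewrite pbw (advance_self adv) -pm mrank_proposal ltnn.
have lt0 : (ptr (run P t0) b < mrank P b w)%N.
  rewrite ltn_neqAle -pbw ptr_mono ?(ltnW t0i1) // andbT pbw.
  apply: contra nbm => /eqP e0; apply/eqP; apply: (no_rejection_inj norej).
  by rewrite pm; apply/eqP; rewrite proposal_eq e0.
have lt1 : (ptr (run P t0.+1) b < mrank P b w)%N by rewrite (advance_other adv nbm).
have window_j k : (t0 < k <= i1)%N ->
    attempt (run P k) = Some (w, m, U) /\ successes (run P k) = j.
  by move/window; rewrite c1.
by have [h piv] := first_reach_pivotal i1h hs window_j lt1 pbw; exists h, b.
Qed.

Lemma card_attempt_free P h b : pivotal P h b -> #|attempt_free P h| = r.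
Proof.
case/and5P => _ _ _; rewrite /attempt_free.
by case: attempt => [[[w m] U]|] // /and3P [_ /eqP].
Qed.

Definition pick_pivotal P := [pick hb : 'I_horizon * M | pivotal P hb.1 hb.2].

Lemma pick_pivotalP P h b : pick_pivotal P = Some (h, b) -> pivotal P h b.
Proof. by rewrite /pick_pivotal; case: pickP => // -[h0 b0] piv [<- <-]. Qed.

Lemma card_nsucc_gt :
  (r * #|[set P : prof | j < nsucc P]| <= #|[set P : prof | nsucc P == j]|)%N.
Proof.
set D := [set Pu : prof * W |
  if pick_pivotal Pu.1 is Some (h, _) then Pu.2 \in attempt_free Pu.1 h else false].
set f := fun Pu : prof * W =>
  if pick_pivotal Pu.1 is Some (h, b) then swap_pref Pu.1 b (attempt_woman Pu.1 h) Pu.2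
  else Pu.1.
have cardD : (r * #|[set P : prof | j < nsucc P]| <= #|D|)%N.
  rewrite (card_pairs D) -sum1_card big_distrr /= big_mkcond /=.
  apply: leq_sum => P _; rewrite inE muln1; case: ifP => // jn.
  case e: (pick_pivotal P) => [[h b]|]; last first.
    have [h [b piv]] := exists_pivotal jn.
    by move: e; rewrite /pick_pivotal; case: pickP => // /(_ (h, b)); rewrite piv.
  rewrite -[X in (X <= _)%N](card_attempt_free (pick_pivotalP e)).
  apply/eq_leq/eq_card => u.
  by rewrite !inE /= e.
have f_inj : {in D &, injective f}.
  move=> [P u] [P' u']; rewrite !inE /f /=.
  case e: (pick_pivotal P) => [[h b]|] //; case e': (pick_pivotal P') => [[h' b']|] // uU uU' eq.
  by have [-> ->] := swap_pivotal_inj (pick_pivotalP e) (pick_pivotalP e') uU uU' eq.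
have sub : f @: D \subset [set P : prof | nsucc P == j].
  apply/subsetP => _ /imsetP [[P u] + ->]; rewrite !inE /f /=.
  by case e: (pick_pivotal P) => [[h b]|] // uU; rewrite (nsucc_swap (pick_pivotalP e)).
by rewrite (leq_trans cardD) // -(card_in_imset f_inj) subset_leq_card.
Qed.

End Pivotal.

End Algorithm.

(** * Tail bounds *)

Section Counting.

Variables (n r : nat) (x : 'I_n + 'I_(n + r)).
Hypothesis r_gt0 : (0 < r)%N.

Local Notation nsucc := (nsucc x r_gt0).
Local Notation count_ge j := #|[set P : profile n r | (j <= nsucc P)%N]|.

Lemma card_nsucc_ge_contract j : (r.+1 * count_ge j.+1 <= count_ge j)%N.
Proof.
have split_ge : count_ge j = (#|[set P : profile n r | nsucc P == j]| + count_ge j.+1)%N.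
  rewrite -cardsUI (_ : _ :&: _ = set0) ?cards0 ?addn0; last first.
    by apply/setP => P; rewrite !inE; case: eqP => // ->; rewrite ltnn.
  by apply: eq_card => P; rewrite !inE leq_eqVlt eq_sym.
by rewrite split_ge mulSn addnC leq_add2r; apply: card_nsucc_gt.
Qed.

Lemma count_ge0 : count_ge 0 = #|profile n r|.
Proof. by apply: eq_card => P; rewrite !inE. Qed.

Lemma sum_nsucc_le : (r * \sum_(P : profile n r) nsucc P <= #|profile n r|)%N.
Proof.
have -> : (\sum_(P : profile n r) nsucc P = \sum_(j < horizon n r) count_ge j.+1)%N.
  rewrite (eq_bigr (fun P => \sum_(j < horizon n r) (j < nsucc P : nat)))%N; last first.
    by move=> P _; rewrite sum_ord_ltn // nsucc_le.
  rewrite exchange_big /=; apply: eq_bigr => j _.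
  by rewrite -sum1_card [in RHS]big_mkcond /=; apply: eq_bigr => P _; rewrite inE.
rewrite -count_ge0; apply: leq_trans (leq_addr _ _) _.
exact: contraction_sum_le card_nsucc_ge_contract.
Qed.

End Counting.

Local Open Scope ring_scope.

Theorem lemmaA3 (n r : nat) (hn : (1 <= n)%N) (hr : (1 <= r)%N)
    (x : 'I_n + 'I_(n + r)) :
  probN (fun P : profile n r => (1 < Nstable P x)%N) <= 1 / (r%:R + 1)
  /\ expect (fun P : profile n r => Nstable P x) <= 1 + 1 / r%:R.
Proof.
have prof_gt0 : (0 < #|profile n r|)%N.
  by apply/card_gt0P; exists ([ffun => 1%g], [ffun => 1%g]).
split.
  rewrite /probN natr1 le_ratio_inv // -(count_ge0 x hr).
  apply: leq_trans (card_nsucc_ge_contract x hr 0); rewrite leq_mul2l; apply/orP; right.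
  apply/subset_leq_card/subsetP => P; rewrite !inE => lt.
  by have := Nstable_le x hr P; lia.
rewrite /expect -natr_sum.
apply: (@le_trans _ _ ((#|profile n r| + \sum_P nsucc x hr P)%:R / #|profile n r|%:R)).
  rewrite ler_pM2r ?invr_gt0 ?ltr0n // ler_nat -sum1_card -big_split /=.
  by apply: leq_sum => P _; rewrite add1n Nstable_le.
rewrite natrD mulrDl divff ?pnatr_eq0 -?lt0n // lerD2l le_ratio_inv //.
exact: sum_nsucc_le.
Qed.
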